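(* Let $\mathbb{C}$ be a regular category, $n$ a positive integer, and for each $i\in\{1,\dots,n\}$ let $\alpha_i':Q_i\to A$ and $\beta_i':Q_i\to B$ be regular epimorphisms and $a_i:A\to C_i$, $b_i:B\to C_i$ morphisms with $b_i\beta_i'=a_i\alpha_i'$. Then there exist an object $Q$, a regular epimorphism $\alpha:Q\to A$ and regular epimorphisms $\beta_i:Q\to B$ ($i=1,\dots,n$) such that $b_i\beta_i=a_i\alpha$ for every $i\in\{1,\dots,n\}$.
   Context: A category is regular if it has finite limits and coequalizers of kernel pairs and regular epimorphisms are stable under pullback. *)

Set Implicit Arguments.
Unset Strict Implicit.

Record Category := {
  Obj :> Type;
  Hom : Obj -> Obj -> Type;
  id : forall X, Hom X X;
  comp : forall X Y Z, Hom Y Z -> Hom X Y -> Hom X Z;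
  comp_id_l : forall X Y (f : Hom X Y), comp (id Y) f = f;
  comp_id_r : forall X Y (f : Hom X Y), comp f (id X) = f;
  comp_assoc : forall W X Y Z (f : Hom W X) (g : Hom X Y) (h : Hom Y Z),
      comp h (comp g f) = comp (comp h g) f
}.

Arguments Hom {C} X Y : rename.
Arguments id {C} X : rename.
Arguments comp {C X Y Z} g f : rename.
Notation "g \o f" := (comp g f) (at level 40, left associativity).

Section Defs.
Variable C : Category.

Definition is_terminal (T : C) : Prop :=
  forall X : C, exists t : Hom X T, forall t' : Hom X T, t' = t.

Definition is_pullback {X Y Z P : C} (f : Hom X Z) (g : Hom Y Z)
    (p1 : Hom P X) (p2 : Hom P Y) : Prop :=
  f \o p1 = g \o p2 /\
  forall (W : C) (u : Hom W X) (v : Hom W Y), f \o u = g \o v ->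
    exists h : Hom W P, (p1 \o h = u /\ p2 \o h = v) /\
      forall h' : Hom W P, p1 \o h' = u -> p2 \o h' = v -> h' = h.

Definition is_coequalizer {X Y Q : C} (u v : Hom X Y) (q : Hom Y Q) : Prop :=
  q \o u = q \o v /\
  forall (W : C) (k : Hom Y W), k \o u = k \o v ->
    exists h : Hom Q W, h \o q = k /\
      forall h' : Hom Q W, h' \o q = k -> h' = h.

Definition regular_epi {Y Q : C} (q : Hom Y Q) : Prop :=
  exists (X : C) (u v : Hom X Y), is_coequalizer u v q.

Definition has_finite_limits : Prop :=
  (exists T : C, is_terminal T) /\
  forall (X Y Z : C) (f : Hom X Z) (g : Hom Y Z),
    exists (P : C) (p1 : Hom P X) (p2 : Hom P Y), is_pullback f g p1 p2.

Definition is_kernel_pair {X Z P : C} (f : Hom X Z) (p1 p2 : Hom P X) : Prop :=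
  is_pullback f f p1 p2.

Definition has_coeq_of_kernel_pairs : Prop :=
  forall (X Z P : C) (f : Hom X Z) (p1 p2 : Hom P X),
    is_kernel_pair f p1 p2 ->
    exists (Q : C) (q : Hom X Q), is_coequalizer p1 p2 q.

Definition regular_epi_pullback_stable : Prop :=
  forall (X Y Z P : C) (f : Hom X Z) (g : Hom Y Z) (p1 : Hom P X) (p2 : Hom P Y),
    regular_epi f -> is_pullback f g p1 p2 -> regular_epi p2.

Definition regular_category : Prop :=
  has_finite_limits /\ has_coeq_of_kernel_pairs /\ regular_epi_pullback_stable.

End Defs.

Arguments regular_epi {C Y Q} q.

(* Pulling back along regular epimorphisms keeps everything regular epi, so the
   spans (alpha'_i, beta'_i) can be amalgamated one at a time: if alpha : Q -> A
   already serves the indices 1..k, the pullback P of alpha along alpha'_(k+1)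
   carries the regular epi alpha o p1 to A, and every beta_i o p1 together with
   beta'_(k+1) o p2 is a regular epi to B, the composite of two regular epis
   being regular epi in a regular category. *)
From Stdlib Require Import Lia PeanoNat.
Set Implicit Arguments.
Unset Strict Implicit.

Section RegularEpis.
Variable C : Category.

Definition epi {X Y : C} (q : Hom X Y) : Prop :=
  forall (W : C) (x y : Hom Y W), x \o q = y \o q -> x = y.

(* [k] coequalizes the kernel pair of [q], phrased with generalized elements so
   that no kernel pair has to be chosen. *)
Definition respects_kernel {X Y W : C} (q : Hom X Y) (k : Hom X W) : Prop :=
  forall (V : C) (u v : Hom V X), q \o u = q \o v -> k \o u = k \o v.

Lemma epi_comp {X Y Z : C} (f : Hom X Y) (g : Hom Y Z) :
  epi f -> epi g -> epi (g \o f).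
Proof.
  intros Hf Hg W x y Hxy. apply Hg, Hf. rewrite <- !comp_assoc. exact Hxy.
Qed.

Lemma regular_epi_epi {X Y : C} (q : Hom X Y) : regular_epi q -> epi q.
Proof.
  intros [P [u [v [Hquv Huniv]]]] W x y Hxy.
  destruct (Huniv W (x \o q)) as [h [_ Hh]].
  { rewrite <- !comp_assoc, Hquv. reflexivity. }
  rewrite (Hh x eq_refl), (Hh y (eq_sym Hxy)). reflexivity.
Qed.

Lemma regular_epi_factor {X Y W : C} (q : Hom X Y) (k : Hom X W) :
  regular_epi q -> respects_kernel q k -> exists h : Hom Y W, h \o q = k.
Proof.
  intros [P [u [v [Hquv Huniv]]]] Hk.
  destruct (Huniv W k (Hk P u v Hquv)) as [h [Hh _]].
  exists h. exact Hh.
Qed.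

Lemma regular_epi_of_factor (Hlim : has_finite_limits C) {X Y : C} (q : Hom X Y) :
  epi q ->
  (forall (W : C) (k : Hom X W), respects_kernel q k -> exists h, h \o q = k) ->
  regular_epi q.
Proof.
  intros Hepi Hfactor. destruct Hlim as [_ Hpb].
  destruct (Hpb _ _ _ q q) as [P [p1 [p2 [Hp Hpuniv]]]].
  exists P, p1, p2. split; [exact Hp|].
  intros W k Hk. destruct (Hfactor W k) as [h Hh].
  - intros V u v Huv. destruct (Hpuniv V u v Huv) as [m [[Hm1 Hm2] _]].
    rewrite <- Hm1, <- Hm2, !comp_assoc, Hk. reflexivity.
  - exists h. split; [exact Hh|].
    intros h' Hh'. apply Hepi. rewrite Hh, Hh'. reflexivity.
Qed.

Lemma is_pullback_sym {X Y Z P : C} (f : Hom X Z) (g : Hom Y Z)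
    (p1 : Hom P X) (p2 : Hom P Y) :
  is_pullback f g p1 p2 -> is_pullback g f p2 p1.
Proof.
  intros [Hp Huniv]. split; [symmetry; exact Hp|].
  intros W u v Huv. destruct (Huniv W v u (eq_sym Huv)) as [h [[H1 H2] Hh]].
  exists h. split; [split; assumption|].
  intros h' H2' H1'. exact (Hh h' H1' H2').
Qed.

Section Regular.
Hypothesis HC : regular_category C.

Lemma regular_epi_pullback_cover {X Y Z : C} (f : Hom X Z) (t : Hom Y Z) :
  regular_epi f ->
  exists (P : C) (e : Hom P Y) (u : Hom P X), regular_epi e /\ f \o u = t \o e.
Proof.
  intros Hf. destruct HC as [[_ Hpb] [_ Hstable]].
  destruct (Hpb _ _ _ f t) as [P [u [e He]]].
  exists P, e, u. split; [exact (Hstable _ _ _ _ _ _ _ _ Hf He) | exact (proj1 He)].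
Qed.

Lemma regular_epi_pullback_pair {X Y Z : C} (f : Hom X Z) (g : Hom Y Z) :
  regular_epi f -> regular_epi g ->
  exists (P : C) (p1 : Hom P X) (p2 : Hom P Y),
    regular_epi p1 /\ regular_epi p2 /\ f \o p1 = g \o p2.
Proof.
  intros Hf Hg. destruct HC as [[_ Hpb] [_ Hstable]].
  destruct (Hpb _ _ _ f g) as [P [p1 [p2 Hp]]].
  exists P, p1, p2. split; [|split].
  - exact (Hstable _ _ _ _ _ _ _ _ Hg (is_pullback_sym Hp)).
  - exact (Hstable _ _ _ _ _ _ _ _ Hf Hp).
  - exact (proj1 Hp).
Qed.

(* Two generalized elements [t1, t2] of [Y] are lifted along [f] over a common
   epimorphic cover [e1 o e2], where the kernel condition on [g o f] applies. *)
Lemma respects_kernel_descend {X Y Z W : C} (f : Hom X Y) (g : Hom Y Z) (k : Hom Y W) :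
  regular_epi f -> respects_kernel (g \o f) (k \o f) -> respects_kernel g k.
Proof.
  intros Hf Hk V t1 t2 Ht.
  destruct (regular_epi_pullback_cover t1 Hf) as [P1 [e1 [u1 [He1 Hu1]]]].
  destruct (regular_epi_pullback_cover (t2 \o e1) Hf) as [P2 [e2 [u2 [He2 Hu2]]]].
  assert (Hlift1 : f \o (u1 \o e2) = t1 \o (e1 \o e2)).
  { rewrite !comp_assoc, Hu1. reflexivity. }
  assert (Hlift2 : f \o u2 = t2 \o (e1 \o e2)).
  { rewrite Hu2, comp_assoc. reflexivity. }
  assert (Hsame : k \o f \o (u1 \o e2) = k \o f \o u2).
  { apply Hk. rewrite <- !comp_assoc, Hlift1, Hlift2, !comp_assoc, Ht. reflexivity. }
  apply (epi_comp (regular_epi_epi He2) (regular_epi_epi He1)).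
  rewrite <- !comp_assoc, <- Hlift1, <- Hlift2, !comp_assoc.
  rewrite !comp_assoc in Hsame. exact Hsame.
Qed.

Lemma regular_epi_comp {X Y Z : C} (f : Hom X Y) (g : Hom Y Z) :
  regular_epi f -> regular_epi g -> regular_epi (g \o f).
Proof.
  intros Hf Hg. apply (regular_epi_of_factor (proj1 HC)).
  - apply epi_comp; apply regular_epi_epi; assumption.
  - intros W k Hk.
    destruct (regular_epi_factor (k := k) Hf) as [k1 Hk1].
    { intros V u v Huv. apply Hk. rewrite <- !comp_assoc, Huv. reflexivity. }
    subst k.
    destruct (regular_epi_factor Hg (respects_kernel_descend Hf Hk)) as [k2 Hk2].
    exists k2. rewrite comp_assoc, Hk2. reflexivity.
Qed.

Section JointCover.
Variables (A B : C) (Cs : nat -> C).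
Variables (a : forall i, Hom A (Cs i)) (b : forall i, Hom B (Cs i)).

Definition joint_cover (I : nat -> Prop) {Q : C}
    (alpha : Hom Q A) (beta : nat -> Hom Q B) : Prop :=
  regular_epi alpha /\
  (forall i, I i -> regular_epi (beta i)) /\
  (forall i, I i -> b i \o beta i = a i \o alpha).

Lemma joint_cover_extend (I I' : nat -> Prop) (j : nat) {Q Qj : C}
    (alpha : Hom Q A) (beta : nat -> Hom Q B) (alpha' : Hom Qj A) (beta' : Hom Qj B) :
  joint_cover I alpha beta ->
  (forall i, I' i -> i <> j -> I i) ->
  regular_epi alpha' -> regular_epi beta' -> b j \o beta' = a j \o alpha' ->
  exists (Q' : C) (alpha'' : Hom Q' A) (beta'' : nat -> Hom Q' B),
    joint_cover I' alpha'' beta''.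
Proof.
  intros [Halpha [Hbeta Hcomm]] HI Halpha' Hbeta' Hcomm'.
  destruct (regular_epi_pullback_pair Halpha Halpha') as [P [p1 [p2 [Hp1 [Hp2 Hp]]]]].
  exists P, (alpha \o p1),
    (fun i => if Nat.eq_dec i j then beta' \o p2 else beta i \o p1).
  split; [|split].
  - apply regular_epi_comp; assumption.
  - intros i Hi. destruct (Nat.eq_dec i j) as [->|Hij]; apply regular_epi_comp; auto.
  - intros i Hi. destruct (Nat.eq_dec i j) as [->|Hij].
    + rewrite comp_assoc, Hcomm', <- !comp_assoc, Hp. reflexivity.
    + rewrite comp_assoc, Hcomm, <- comp_assoc by auto. reflexivity.
Qed.

End JointCover.
End Regular.
End RegularEpis.

Theorem lemma5p4 (C : Category) (HC : regular_category C) (n : nat) (hn : 0 < n)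
  (A B : C) (Qs Cs : nat -> C)
  (alpha' : forall i, Hom (Qs i) A) (beta' : forall i, Hom (Qs i) B)
  (a : forall i, Hom A (Cs i)) (b : forall i, Hom B (Cs i))
  (halpha' : forall i, 1 <= i <= n -> regular_epi (alpha' i))
  (hbeta' : forall i, 1 <= i <= n -> regular_epi (beta' i))
  (hcomm : forall i, 1 <= i <= n -> b i \o beta' i = a i \o alpha' i) :
  exists (Q : C) (alpha : Hom Q A) (beta : nat -> Hom Q B),
    regular_epi alpha /\
    (forall i, 1 <= i <= n -> regular_epi (beta i)) /\
    (forall i, 1 <= i <= n -> b i \o beta i = a i \o alpha).
Proof.
  enough (Hcover : forall k, 1 <= k <= n ->
    exists (Q : C) (alpha : Hom Q A) (beta : nat -> Hom Q B),
      joint_cover a b (fun i => 1 <= i <= k) alpha beta)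
    by exact (Hcover n (conj hn (le_n n))).
  induction k as [|k IH]; intros Hk; [lia|].
  destruct (Nat.eq_dec k 0) as [->|Hk0].
  - exists (Qs 1), (alpha' 1), (fun _ => beta' 1).
    split; [apply halpha'; lia | split; intros i Hi; replace i with 1 by lia].
    + apply hbeta'; lia.
    + apply hcomm; lia.
  - destruct IH as [Q [alpha [beta Hcover]]]; [lia|].
    apply (joint_cover_extend HC (j := S k)
             (alpha' := alpha' (S k)) (beta' := beta' (S k)) Hcover);
      [intros; lia | apply halpha' | apply hbeta' | apply hcomm]; lia.
Qed.
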